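(* Let $X=\mathbb{Z}$, $\beta\in Sym(X)$ the translation $x\mapsto x+1$, and $n,m\geq1$. Let $c=c(a_1,\dots,a_n,b)$ be a nontrivial cyclically reduced word in $\mathbb{F}_{n+1}=\langle a_1,\dots,a_n,b\rangle$ with exponent sum of $b$ equal to zero, and $d=d(a'_1,\dots,a'_m,b')$ a nontrivial cyclically reduced word in $\mathbb{F}_{m+1}=\langle a'_1,\dots,a'_m,b'\rangle$ with exponent sum of $b'$ equal to zero. Let $\alpha=(\alpha_1,\dots,\alpha_n)\in Sym(X)^n$ be such that, for the action of $\mathbb{F}_{n+1}$ on $X$ given by $a_i\mapsto\alpha_i$, $b\mapsto\beta$ (so $c$ acts as $c(\alpha,\beta)$): the action is faithful and transitive; for every $w\in\mathbb{F}_{n+1}\setminus\langle c\rangle$ there are infinitely many $x$ with $cx=x$, $cwx=wx$, $wx\neq x$; there is a Følner sequence $(A_k)_{k\geq1}$ for this action consisting of pairwise disjoint sets with $|A_k|=k$, each pointwise fixed by $c$; for every $k\geq1$ there are infinitely many $\langle c\rangle$-orbits of size $k$; every $\langle c\rangle$-orbit is finite; and every finite index subgroup of $\mathbb{F}_{n+1}$ acts transitively. Let $\alpha'=(\alpha'_1,\dots,\alpha'_m)\in Sym(X)^m$ satisfy the same properties for $\mathbb{F}_{m+1}$ (via $a'_j\mapsto\alpha'_j$, $b'\mapsto\beta$) and $d$, with Følner sequence $(B_k)_{k\geq1}$. Let $Z=\{\sigma\in Sym(X):\sigma\, c(\alpha,\beta)=d(\alpha',\beta)\,\sigma\}$, with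 the topology of pointwise convergence. Then the set $\mathcal{O}_2=\{\sigma\in Z:\text{there is a subsequence }(k_l)_{l\geq1}\text{ with }\sigma(A_{k_l})=B_{k_l}\text{ for all }l\geq1\}$ is generic in $Z$.
   Context: A subset of a Baire space is meagre if it is a countable union of closed sets with empty interior, and generic (dense $G_\delta$) if its complement is meagre. $Z$ is closed in $Sym(X)$, hence a Baire space. A sequence $(A_k)$ of finite non-empty subsets is Følner for an action of a group $\Gamma$ if $|A_k\triangle gA_k|/|A_k|\to0$ for all $g\in\Gamma$. *)

From HB Require Import structures.
From mathcomp Require Import all_boot all_order all_algebra.
From mathcomp Require Import finmap.
Set Implicit Arguments. Unset Strict Implicit. Unset Printing Implicit Defensive.
Import Order.TTheory GRing.Theory Num.Theory.
Local Open Scope ring_scope.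

Record sym := Sym { sf : int -> int; sg : int -> int;
  sfK : cancel sf sg; sgK : cancel sg sf }.

Lemma shift_fK : cancel (fun x : int => x + 1) (fun x => x - 1).
Proof. by move=> x; rewrite addrK. Qed.
Lemma shift_gK : cancel (fun x : int => x - 1) (fun x => x + 1).
Proof. by move=> x; rewrite subrK. Qed.
Definition shift : sym := Sym shift_fK shift_gK.

(* a letter (g, true) is g, (g, false) is g^-1 *)
Definition letter (G : eqType) := (G * bool)%type.
Definition word (G : eqType) := seq (letter G).
Definition linv (G : eqType) (l : letter G) : letter G := (l.1, ~~ l.2).
Definition winv (G : eqType) (w : word G) : word G := rev (map (@linv G) w).

Fixpoint reduced (G : eqType) (w : word G) : bool :=
  match w with
  | l :: ((l' :: _) as w') => (l' != linv l) && reduced w'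
  | _ => true
  end.

Definition nontriv_cyc_reduced (G : eqType) (w : word G) : Prop :=
  match w with
  | [::] => False
  | l :: _ => reduced w /\ last l w != linv l
  end.

Fixpoint reduce (G : eqType) (w : word G) : word G :=
  match w with
  | [::] => [::]
  | l :: w0 => match reduce w0 with
               | l' :: w' => if l' == linv l then w' else l :: l' :: w'
               | [::] => [:: l]
               end
  end.

Definition wpow (G : eqType) (w : word G) (j : int) : word G :=
  match j with
  | Posz k => flatten (nseq k w)
  | Negz k => flatten (nseq k.+1 (winv w))
  end.

Definition in_cyclic (G : eqType) (c w : word G) : Prop :=
  exists j : int, reduce w = reduce (wpow c j).

Definition expsum (G : eqType) (g : G) (w : word G) : int :=
  \sum_(l <- w | l.1 == g) (if l.2 then 1 else -1).

(* left action: the word l_1 l_2 ... l_k acts as l_1 o l_2 o ... o l_k *)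
Fixpoint wact (G : eqType) (f : G -> sym) (w : word G) (x : int) : int :=
  match w with
  | [::] => x
  | (g, b) :: w' => (if b then sf (f g) else sg (f g)) (wact f w' x)
  end.

(* generators of F_{n+1}: Some i = a_i, None = b *)
Definition gen (n : nat) := option 'I_n.
Definition interp (n : nat) (alpha : 'I_n -> sym) (beta : sym) : gen n -> sym :=
  fun o => if o is Some i then alpha i else beta.

Definition infinite_int (P : int -> Prop) : Prop :=
  ~ exists s : seq int, forall x, P x -> x \in s.

Section Orbits.
Variables (G : eqType) (f : G -> sym) (c : word G).
Definition in_orbit (x y : int) : Prop :=
  exists j : int, y = wact f (wpow c j) x.
Definition orbit_finite (x : int) : Prop :=
  exists s : seq int, forall y, in_orbit x y -> y \in s.
Definition orbit_size (x : int) (k : nat) : Prop :=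
  exists s : seq int, [/\ uniq s, size s = k & forall y, in_orbit x y <-> y \in s].
(* there are infinitely many <c>-orbits of size k: no finite list of
   points represents all of them *)
Definition infinitely_many_orbits (k : nat) : Prop :=
  ~ exists s : seq int, forall x, orbit_size x k ->
       exists2 y, y \in s & in_orbit y x.
End Orbits.

(* subgroups of the free group on G (as sets of reduced words) *)
Definition subgroup (G : eqType) (H : word G -> Prop) : Prop :=
  [/\ (forall h, H h -> reduced h), H [::],
      (forall u v, H u -> H v -> H (reduce (u ++ v)))
    & (forall u, H u -> H (winv u))].
Definition finite_index (G : eqType) (H : word G -> Prop) : Prop :=
  exists t : seq (word G), forall w, reduced w ->
    exists2 u, u \in t & H (reduce (winv u ++ w)).

Definition admissible (n : nat) (c : word (gen n)) (alpha : 'I_n -> sym) : Prop :=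
  let f := interp alpha shift in
  [/\
      (forall w, reduced w -> w != [::] -> exists x, wact f w x != x),
      (forall x y, exists w, wact f w x = y) &
   [/\
      (forall w, reduced w -> ~ in_cyclic c w ->
         infinite_int (fun x => [/\ wact f c x = x,
                                    wact f c (wact f w x) = wact f w x
                                  & wact f w x <> x])),
      (forall k, (0 < k)%N -> infinitely_many_orbits f c k),
      (forall x, orbit_finite f c x)
    &
      (forall H, subgroup H -> finite_index H ->
         forall x y, exists2 h, H h & wact f h x = y)]].

Local Open Scope fset_scope.
Definition folner_seq (n : nat) (c : word (gen n)) (alpha : 'I_n -> sym)
  (A : nat -> {fset int}) : Prop :=
  let f := interp alpha shift in
  [/\ (forall g, reduced g -> forall eps : rat, 0 < eps ->
         exists K : nat, forall k : nat, (0 < k)%N -> (K <= k)%N ->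
           let gA := [fset wact f g x | x in A k] in
           ((#|` (A k `\` gA) `|` (gA `\` A k)|)%:R / (#|` A k|)%:R : rat) < eps),
      (forall k l, (0 < k)%N -> (0 < l)%N -> k != l -> A k `&` A l = fset0),
      (forall k, (0 < k)%N -> #|` A k| = k)
    & (forall k, (0 < k)%N -> forall x, x \in A k -> wact f c x = x)].

Definition agree_on (F : seq int) (s t : sym) : Prop :=
  forall x, x \in F -> sf s x = sf t x.
Definition open_in (Z U : sym -> Prop) : Prop :=
  (forall s, U s -> Z s) /\
  forall s, U s -> exists F : seq int, forall t, Z t -> agree_on F s t -> U t.
Definition closed_in (Z C : sym -> Prop) : Prop :=
  (forall s, C s -> Z s) /\ open_in Z (fun s => Z s /\ ~ C s).
Definition empty_interior_in (Z C : sym -> Prop) : Prop :=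
  forall U, open_in Z U -> (forall s, U s -> C s) -> forall s, ~ U s.
Definition meagre_in (Z M : sym -> Prop) : Prop :=
  exists F : nat -> sym -> Prop,
    (forall k, closed_in Z (F k) /\ empty_interior_in Z (F k)) /\
    (forall s, M s <-> exists k, F k s).
Definition generic_in (Z O : sym -> Prop) : Prop :=
  (forall s, O s -> Z s) /\ meagre_in Z (fun s => Z s /\ ~ O s).

From HB Require Import structures.
From mathcomp Require Import all_boot all_order all_algebra.
From mathcomp Require Import finmap.
From Stdlib Require Import Classical ClassicalEpsilon.
Import Order.TTheory GRing.Theory Num.Theory.
Local Open Scope ring_scope.
Local Open Scope fset_scope.
Set Implicit Arguments. Unset Strict Implicit.

(* The set O_2 is the intersection over N of the sets U_N of sigma in Z with
   sigma(A_k) = B_k for some k >= N, so it suffices that each U_N is open and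
   dense in Z.  U_N is open because the condition only involves sigma on the
   finite set A_k.  For density, take sigma in Z and a finite set F: since the
   A_k (resp. B_k) are pairwise disjoint, for k large A_k misses F and B_k
   misses sigma(F).  Composing sigma with the involution exchanging
   sigma(A_k) \ B_k and B_k \ sigma(A_k) gives a permutation that agrees with
   sigma on F and maps A_k onto B_k; it still conjugates c to d because c fixes
   A_k pointwise, d fixes B_k pointwise, and d is injective. *)

Definition dense_in (Z U : sym -> Prop) : Prop :=
  forall s, Z s -> forall F : seq int, exists2 t, agree_on F s t & U t.

Lemma generic_in_cap_open_dense (Z O : sym -> Prop) (U : nat -> sym -> Prop) :
  (forall N, open_in Z (U N)) -> (forall N, dense_in Z (U N)) ->
  (forall s, O s <-> Z s /\ forall N, U N s) -> generic_in Z O.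
Proof.
move=> Uopen Udense OE; split=> [s /OE[] //|].
exists (fun N s => Z s /\ ~ U N s); split=> [N|s]; last first.
  split=> [[Zs nOs]|[N [Zs nUs]]]; last by split=> // /OE[_ /(_ N)].
  apply: NNPP => nex; apply: nOs; apply/OE; split=> // N.
  by apply: NNPP => nUs; apply: nex; exists N.
have [UZ Uop] := Uopen N.
split; first split=> [s [] //|].
  split=> [s [] //|s [Zs nnUs]].
  have [F hF] := Uop s (NNPP _ (fun nUs => nnUs (conj Zs nUs))).
  by exists F => t Zt st; split=> // [[_]]; apply; apply: hF.
move=> V [VZ Vop] VC s Vs.
have [F hF] := Vop s Vs.
have [t st Ut] := Udense N s (VZ s Vs) F.
by have [_] := VC t (hF t (UZ t Ut) st).
Qed.

Definition comp_sym (s r : sym) : sym.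
Proof.
refine (@Sym (sf r \o sf s) (sg s \o sg r) _ _) => x /=.
- by rewrite !sfK.
- by rewrite !sgK.
Defined.

Lemma wact_inj (G : eqType) (f : G -> sym) (w : word G) : injective (wact f w).
Proof.
elim: w => [|[g [] w IH]] x y //= H; apply: IH.
- exact: (can_inj (@sfK _)) H.
- exact: (can_inj (@sgK _)) H.
Qed.

Lemma in_enum_fset (K : choiceType) (S : {fset K}) (x : K) :
  (x \in enum_fset S) = (x \in S).
Proof. by []. Qed.

Section Swap.
Variables S T : {fset int}.

Let u := enum_fset (S `\` T).
Let v := enum_fset (T `\` S).

Definition swapf (x : int) : int :=
  if x \in u then nth 0 v (index x u)
  else if x \in v then nth 0 u (index x v) else x.

Lemma swapf_out x : x \notin S -> x \notin T -> swapf x = x.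
Proof.
by move=> xS xT; rewrite /swapf !in_enum_fset !in_fsetD (negbTE xS) (negbTE xT) !andbF.
Qed.

Hypothesis card_ST : #|` S| = #|` T|.

Lemma size_swap_enum : size u = size v.
Proof. by rewrite /u /v -!/(#|` _|) !cardfsD card_ST fsetIC. Qed.

Lemma swapf_in_u x : x \in u -> swapf x = nth 0 v (index x u) /\ swapf x \in v.
Proof.
move=> xu; rewrite /swapf xu; split=> //.
by apply: mem_nth; rewrite -size_swap_enum index_mem.
Qed.

Lemma swapf_in_v x : x \in v -> swapf x = nth 0 u (index x v) /\ swapf x \in u.
Proof.
move=> xv; have xu : x \notin u.
  by move: xv; rewrite !in_enum_fset !in_fsetD => /andP[/negPf ->]; rewrite andbF.
rewrite /swapf (negbTE xu) xv; split=> //.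
by apply: mem_nth; rewrite size_swap_enum index_mem.
Qed.

Lemma swapfK : involutive swapf.
Proof.
move=> x; have [xu|xu] := boolP (x \in u).
  have [-> yv] := swapf_in_u xu; have [-> _] := swapf_in_v yv.
  by rewrite index_uniq ?fset_uniq ?nth_index // -size_swap_enum index_mem.
have [xv|xv] := boolP (x \in v).
  have [-> yu] := swapf_in_v xv; have [-> _] := swapf_in_u yu.
  by rewrite index_uniq ?fset_uniq ?nth_index // size_swap_enum index_mem.
have fixx : swapf x = x by rewrite /swapf (negbTE xu) (negbTE xv).
by rewrite !fixx.
Qed.

Definition swap_sym : sym := Sym swapfK swapfK.

Lemma swapf_mem x : x \in S -> swapf x \in T.
Proof.
move=> xS; have [xu|xu] := boolP (x \in u).
  by have [_] := swapf_in_u xu; rewrite in_enum_fset in_fsetD => /andP[].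
have xv : x \notin v by rewrite in_enum_fset in_fsetD xS.
rewrite /swapf (negbTE xu) (negbTE xv).
by move: xu; rewrite in_enum_fset in_fsetD xS andbT negbK.
Qed.

Lemma swapf_memV x : x \in T -> swapf x \in S.
Proof.
move=> xT; have [xv|xv] := boolP (x \in v).
  by have [_] := swapf_in_v xv; rewrite in_enum_fset in_fsetD => /andP[].
have xu : x \notin u by rewrite in_enum_fset in_fsetD xT.
rewrite /swapf (negbTE xu) (negbTE xv).
by move: xv; rewrite in_enum_fset in_fsetD xT andbT negbK.
Qed.

Lemma imfset_swapf : [fset swapf x | x in S] = T.
Proof.
apply/fsetP => y; apply/imfsetP/idP => /= [[x xS ->]|yT]; first exact: swapf_mem.
by exists (swapf y); [exact: swapf_memV | rewrite swapfK].
Qed.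

Lemma swapf_commute (g : int -> int) : injective g ->
  {in S, g =1 id} -> {in T, g =1 id} -> forall x, swapf (g x) = g (swapf x).
Proof.
move=> g_inj gS gT x.
have [xS|xS] := boolP (x \in S); first by rewrite gS // gT // swapf_mem.
have [xT|xT] := boolP (x \in T); first by rewrite gT // gS // swapf_memV.
have gxS : g x \notin S by apply: contra xS => gxS; rewrite -(g_inj _ _ (gS _ gxS)).
have gxT : g x \notin T by apply: contra xT => gxT; rewrite -(g_inj _ _ (gT _ gxT)).
by rewrite !swapf_out.
Qed.

End Swap.

Definition disjoint_family (A : nat -> {fset int}) : Prop :=
  forall k l, (0 < k)%N -> (0 < l)%N -> k != l -> A k `&` A l = fset0.

Lemma disjoint_family_eventually_avoids (A : nat -> {fset int}) (F : seq int) :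
  disjoint_family A ->
  exists K, forall k, (K <= k)%N -> (0 < k)%N -> forall x, x \in F -> x \notin A k.
Proof.
move=> Adis; elim: F => [|x F [K IH]]; first by exists 0%N.
have [[k0 [k0_gt0 xA]]|nx] := classic (exists k0, (0 < k0)%N /\ x \in A k0).
  exists (maxn K k0.+1) => k; rewrite geq_max => /andP[Kk k0k] k_gt0 y.
  rewrite inE => /orP[/eqP->|yF]; last exact: IH.
  apply/negP => xAk; have : x \in A k0 `&` A k by rewrite in_fsetI xA xAk.
  by rewrite Adis // ?in_fset0 // neq_ltn k0k.
exists K => k Kk k_gt0 y; rewrite inE => /orP[/eqP->|yF]; last exact: IH.
by apply/negP => xAk; apply: nx; exists k.
Qed.

Lemma increasing_seq_iff (P : nat -> Prop) :
  (forall N, exists k, (N <= k)%N /\ P k) <->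
  exists kk : nat -> nat, (forall l, (kk l < kk l.+1)%N) /\ forall l, P (kk l).
Proof.
split=> [hP|[kk [kk_incr Pkk]] N].
  pose g N := proj1_sig (constructive_indefinite_description _ (hP N)).
  have gP N : (N <= g N)%N /\ P (g N).
    by rewrite /g; case: constructive_indefinite_description.
  pose next k := g k.+1.
  exists (fun l => iter l.+1 next 0%N); split=> l.
  - by case: (gP (iter l.+1 next 0%N).+1).
  - by case: (gP (iter l next 0%N).+1).
have kk_ge l : (l <= kk l)%N.
  by elim: l => // l IH; exact: leq_ltn_trans IH (kk_incr l).
by exists (kk N).
Qed.

Section Matching.
Variables (fc fd : int -> int) (A B : nat -> {fset int}).
Hypotheses (fd_inj : injective fd)
  (A_disj : disjoint_family A) (B_disj : disjoint_family B)
  (A_card : forall k, (0 < k)%N -> #|` A k| = k)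
  (B_card : forall k, (0 < k)%N -> #|` B k| = k)
  (A_fix : forall k, (0 < k)%N -> {in A k, fc =1 id})
  (B_fix : forall k, (0 < k)%N -> {in B k, fd =1 id}).

Definition intertwines (s : sym) : Prop := forall x, sf s (fc x) = fd (sf s x).

Definition matches_at (s : sym) (k : nat) : Prop :=
  (0 < k)%N /\ [fset sf s x | x in A k] = B k.

Definition matches_beyond (N : nat) (s : sym) : Prop :=
  intertwines s /\ exists k, (N <= k)%N /\ matches_at s k.

Lemma matches_beyond_open N : open_in intertwines (matches_beyond N).
Proof.
split=> [s [] //|s [_ [k [Nk [k_gt0 sAB]]]]].
exists (enum_fset (A k)) => t It st; split=> //; exists k; do !split=> //.
by rewrite -sAB; apply: eq_in_imfset => x xA; rewrite st.
Qed.

Lemma matches_beyond_dense N : dense_in intertwines (matches_beyond N).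
Proof.
move=> s Is F.
have [KA hKA] := disjoint_family_eventually_avoids F A_disj.
have [KB hKB] := disjoint_family_eventually_avoids (map (sf s) F) B_disj.
pose k := maxn (maxn KA KB) N.+1.
have k_gt0 : (0 < k)%N by rewrite leq_max orbT.
have Nk : (N <= k)%N by rewrite leq_max leqnSn orbT.
have KAk : (KA <= k)%N by rewrite !leq_max leqnn.
have KBk : (KB <= k)%N by rewrite !leq_max leqnn orbT.
have s_inj : injective (sf s) := can_inj (@sfK s).
have card_sAB : #|` [fset sf s x | x in A k]| = #|` B k|.
  by rewrite card_imfset //= A_card ?B_card.
exists (comp_sym s (swap_sym card_sAB)) => [x xF /=|].
  rewrite swapf_out //; last exact/hKB/map_f.
  apply/imfsetP => -[a /= aA /s_inj ax].
  by move: (hKA k KAk k_gt0 x xF); rewrite ax aA.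
split=> [x /=|]; last exists k; do ?split=> //.
  rewrite Is swapf_commute //; last exact: B_fix.
  by move=> _ /imfsetP[a /= aA ->]; rewrite -Is (A_fix k_gt0 aA).
by rewrite /= imfset_comp imfset_swapf.
Qed.

End Matching.

Theorem proposition13 (n m : nat) (hn : (0 < n)%N) (hm : (0 < m)%N)
  (c : word (gen n)) (d : word (gen m))
  (hc : nontriv_cyc_reduced c) (hcb : expsum None c = 0)
  (hd : nontriv_cyc_reduced d) (hdb : expsum None d = 0)
  (alpha : 'I_n -> sym) (alpha' : 'I_m -> sym)
  (A B : nat -> {fset int})
  (ha : admissible c alpha) (hA : folner_seq c alpha A)
  (ha' : admissible d alpha') (hB : folner_seq d alpha' B) :
  let Z := fun s : sym => forall x,
      sf s (wact (interp alpha shift) c x) = wact (interp alpha' shift) d (sf s x) in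
  generic_in Z (fun s => Z s /\
    exists kk : nat -> nat,
      [/\ (forall l, (kk l < kk l.+1)%N), (forall l, (0 < kk l)%N)
        & forall l, [fset sf s x | x in A (kk l)] = B (kk l)]).
Proof.
move=> Z; case: hA => _ A_disj A_card A_fix; case: hB => _ B_disj B_card B_fix.
pose fc := wact (interp alpha shift) c; pose fd := wact (interp alpha' shift) d.
apply: (generic_in_cap_open_dense (U := matches_beyond fc fd A B)).
- exact: matches_beyond_open.
- by apply: matches_beyond_dense; first exact: wact_inj.
move=> s; rewrite -[Z s]/(intertwines fc fd s); split.
  move=> [Is [kk [kk_incr kk_gt0 skk]]]; split=> // N; split=> //.
  by move: N; apply/(increasing_seq_iff (matches_at A B s)); exists kk.
move=> [Is hs]; split=> //.
have [|kk [kk_incr Pkk]] := (increasing_seq_iff (matches_at A B s)).1.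
  by move=> N; have [_] := hs N.
by exists kk; split=> l; case: (Pkk l).
Qed.
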